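(* Let $k\ge1$ and $0<a\le1$, and consider on $[0,+\infty)$ the function $$f_{a,k}(s):=\Big(1-\big(\tfrac{s}{a}\big)^{2k}\Big)^{2k}s+\Big(1-\Big(1-\big(\tfrac{s}{a}\big)^{2k}\Big)^{2k}\Big)\sqrt{s},$$ which is a semialgebraic function of class $C^{2k}$. Then: $f_{a,k}$ is non-negative and strictly increasing on $[0,a]$; the Taylor polynomial of $f_{a,k}$ of degree $2k$ at $s=0$ is $s$; the Taylor polynomials of degree $2k-1$ of $f_{a,k}$ and of $\sqrt{s}$ at $s=a$ coincide; and $f_{a,k}(s)\le\sqrt{s}$ for all $s\in[0,1]$. *)

From Stdlib Require Import Reals Lra Lia.
From Coquelicot Require Import Coquelicot.
Open Scope R_scope.

Definition f_ak (a : R) (k : nat) (s : R) : R :=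
  (1 - (s / a) ^ (2 * k)) ^ (2 * k) * s
  + (1 - (1 - (s / a) ^ (2 * k)) ^ (2 * k)) * sqrt s.

(* Derivative of g at x, relative to the domain [0,+oo)
   (one-sided at x = 0, ordinary at x > 0). *)
Definition is_derive_nonneg (g : R -> R) (x l : R) : Prop :=
  filterlim (fun h => (g (x + h) - g x) / h)
    (within (fun h => h <> 0 /\ 0 <= x + h) (locally 0)) (locally l).

Definition continuous_nonneg (g : R -> R) (x : R) : Prop :=
  filterlim g (within (fun y => 0 <= y) (locally x)) (locally (g x)).

(* Taylor polynomial of degree n at s0, given the family d of derivatives
   (d j = j-th derivative):  sum_{j=0}^n d j s0 / j! * (x - s0)^j. *)
Definition taylor_poly (d : nat -> R -> R) (n : nat) (s0 x : R) : R :=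
  sum_f_R0 (fun j => d j s0 / INR (Factorial.fact j) * (x - s0) ^ j) n.

From Stdlib Require Import Reals Lra Lia.
From Coquelicot Require Import Coquelicot.
Open Scope R_scope.

(* With t = sqrt s and u = (s/a)^(2k) = t^(4k) / a^(2k), the weight 1 - (1 - u)^(2k) is
   divisible by u, so f(s) = s + t^(4k+1) W(t) for a polynomial W.  Differentiating
   t^m P(t) with respect to s gives t^(m-2) Q(t) with Q again a polynomial, so the j-th
   derivative of f is the j-th derivative of s plus t^(4k+1-2j) W_j(t): for j <= 2k it is
   continuous on [0,+oo), and for j >= 2 it vanishes at 0, whence the Taylor polynomial s.
   Near a, f(s) - sqrt s = (1 - (s/a)^(2k))^(2k) (s - sqrt s) has a zero of order 2k, so
   the derivatives of order < 2k of f and sqrt agree at a; they are computed in the algebra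
   generated by x, sqrt x and 1/sqrt x, which is closed under differentiation on (0,+oo).
   The inequalities hold because f(s) is a convex combination of s <= sqrt s whose weight
   on s decreases on [0,a]. *)

(** * One-sided derivatives and Taylor polynomials on [0, +oo) *)

Lemma locally_pos x : 0 < x -> locally x (fun y => 0 < y).
Proof.
  intros Hx. exists (mkposreal x Hx). intros y Hy.
  change (Rabs (y - x) < x) in Hy. apply Rabs_lt_between' in Hy. lra.
Qed.

Lemma is_derive_nonneg_of_is_derive g x l :
  is_derive g x l -> is_derive_nonneg g x l.
Proof.
  intros Hg. apply is_derive_Reals in Hg. apply filterlim_locally. intros eps.
  destruct (Hg eps (cond_pos eps)) as [delta Hdelta].
  exists delta. intros h Hh [Hh0 _].
  change (Rabs (h - 0) < delta) in Hh. rewrite Rminus_0_r in Hh.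
  exact (Hdelta h Hh0 Hh).
Qed.

Lemma is_derive_of_is_derive_nonneg g x l :
  0 < x -> is_derive_nonneg g x l -> is_derive g x l.
Proof.
  intros Hx Hg. apply is_derive_Reals. intros eps Heps.
  destruct (proj1 (filterlim_locally _ _) Hg (mkposreal eps Heps)) as [delta Hdelta].
  assert (Hmin : 0 < Rmin delta x) by (apply Rmin_pos; [apply cond_pos | exact Hx]).
  exists (mkposreal _ Hmin). intros h Hh0 Hh. simpl in Hh.
  assert (Hdx : Rabs h < delta /\ Rabs h < x).
  { split; eapply Rlt_le_trans; eauto; [apply Rmin_l | apply Rmin_r]. }
  apply (Hdelta h).
  - change (Rabs (h - 0) < delta). rewrite Rminus_0_r. apply Hdx.
  - split; [exact Hh0|]. destruct Hdx as [_ Hdx]. apply Rabs_lt_between in Hdx. lra.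
Qed.

Lemma is_derive_nonneg_plus f g x lf lg :
  is_derive_nonneg f x lf -> is_derive_nonneg g x lg ->
  is_derive_nonneg (fun y => f y + g y) x (lf + lg).
Proof.
  intros Hf Hg.
  apply (filterlim_ext (fun h => (f (x + h) - f x) / h + (g (x + h) - g x) / h)).
  { intros h. unfold Rdiv. ring. }
  exact (filterlim_comp_2 _ _ Rplus Hf Hg (filterlim_plus lf lg)).
Qed.

Lemma is_derive_nonneg_ext f g x l :
  0 <= x -> (forall y, 0 <= y -> f y = g y) ->
  is_derive_nonneg f x l -> is_derive_nonneg g x l.
Proof.
  intros Hx Hfg Hf. refine (filterlim_within_ext _ _ _ _ Hf).
  intros h [_ Hh]. rewrite !Hfg by lra. reflexivity.
Qed.

Lemma is_derive_nonneg_0 g G :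
  continuous G 0 -> (forall h, 0 < h -> (g h - g 0) / h = G (sqrt h)) ->
  is_derive_nonneg g 0 (G 0).
Proof.
  intros HG Hq.
  assert (HGs : continuous (fun h => G (sqrt h)) 0).
  { apply continuous_comp; [apply continuous_sqrt | rewrite sqrt_0; exact HG]. }
  unfold continuous in HGs. cbv beta in HGs. rewrite sqrt_0 in HGs.
  apply (filterlim_within_ext _ (fun h => G (sqrt h))).
  - intros h [Hh0 Hh]. rewrite Rplus_0_l in *. symmetry. apply Hq. lra.
  - exact (filterlim_filter_le_1 _ (filter_le_within _) HGs).
Qed.

Lemma continuous_nonneg_of_continuous g x : continuous g x -> continuous_nonneg g x.
Proof. intros Hg. exact (filterlim_filter_le_1 _ (filter_le_within _) Hg). Qed.

Lemma Derive_n_of_is_derive_nonneg (d : nat -> R -> R) n :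
  (forall j x, (j < n)%nat -> 0 <= x -> is_derive_nonneg (d j) x (d (S j) x)) ->
  forall j x, (j <= n)%nat -> 0 < x -> Derive_n (d O) j x = d j x.
Proof.
  intros Hd j. induction j as [|j IHj]; intros x Hj Hx; [reflexivity|].
  simpl. rewrite (Derive_ext_loc _ (d j)).
  - apply is_derive_unique, is_derive_of_is_derive_nonneg; [exact Hx|].
    apply Hd; lia || lra.
  - apply (filter_imp (fun y => 0 < y)); [|apply locally_pos, Hx].
    intros y Hy. apply IHj; [lia | exact Hy].
Qed.

Lemma taylor_poly_ext d e n s0 x :
  (forall j, (j <= n)%nat -> d j s0 = e j s0) -> taylor_poly d n s0 x = taylor_poly e n s0 x.
Proof. intros Hde. apply sum_eq. intros j Hj. rewrite Hde by exact Hj. reflexivity. Qed.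

Lemma taylor_poly_0_id d n x :
  (1 <= n)%nat -> d 1%nat 0 = 1 -> (forall j, (j <= n)%nat -> j <> 1%nat -> d j 0 = 0) ->
  taylor_poly d n 0 x = x.
Proof.
  intros Hn Hd1 Hd0. unfold taylor_poly. induction n as [|n IHn]; [lia|].
  rewrite tech5. destruct n as [|n].
  - simpl. rewrite Hd1, Hd0 by lia. field.
  - rewrite IHn by (lia || (intros; apply Hd0; lia)). rewrite Hd0 by lia. unfold Rdiv. ring.
Qed.

(** * Algebras of functions closed under differentiation *)

Inductive fun_alg (D : R -> Prop) (B : (R -> R) -> Prop) : (R -> R) -> Prop :=
  | fun_alg_gen F : B F -> fun_alg D B F
  | fun_alg_const c : fun_alg D B (fun _ => c)
  | fun_alg_id : fun_alg D B (fun x => x)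
  | fun_alg_plus F G : fun_alg D B F -> fun_alg D B G -> fun_alg D B (fun x => F x + G x)
  | fun_alg_mult F G : fun_alg D B F -> fun_alg D B G -> fun_alg D B (fun x => F x * G x)
  | fun_alg_ext F G : fun_alg D B F -> (forall x, D x -> F x = G x) -> fun_alg D B G.

Section FunAlgebra.

Variables (D : R -> Prop) (B : (R -> R) -> Prop).

Lemma fun_alg_minus F G :
  fun_alg D B F -> fun_alg D B G -> fun_alg D B (fun x => F x - G x).
Proof.
  intros HF HG. apply (fun_alg_ext _ _ (fun x => F x + (fun _ => -1) x * G x)).
  - apply fun_alg_plus; [exact HF|]. apply fun_alg_mult; [apply fun_alg_const | exact HG].
  - intros x _. ring.
Qed.

Lemma fun_alg_pow F n : fun_alg D B F -> fun_alg D B (fun x => F x ^ n).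
Proof.
  intros HF. induction n as [|n IHn]; simpl.
  - apply fun_alg_const.
  - exact (fun_alg_mult _ _ _ (fun x => F x ^ n) HF IHn).
Qed.

Lemma fun_alg_sum (F : nat -> R -> R) n :
  (forall i, fun_alg D B (F i)) -> fun_alg D B (fun x => sum_f_R0 (fun i => F i x) n).
Proof.
  intros HF. induction n as [|n IHn]; simpl; [apply HF|].
  exact (fun_alg_plus _ _ _ (F (S n)) IHn (HF (S n))).
Qed.

Hypothesis D_open : forall x, D x -> locally x D.
Hypothesis gen_Derive :
  forall F, B F -> (forall x, D x -> ex_derive F x) /\ fun_alg D B (Derive F).

Lemma fun_alg_ex_derive F x : fun_alg D B F -> D x -> ex_derive F x.
Proof.
  intros HF. revert x.
  induction HF as [F HF | c | | F G _ IHF _ IHG | F G _ IHF _ IHG | F G _ IHF HFG];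
    intros x Hx.
  - apply gen_Derive; assumption.
  - apply ex_derive_const.
  - apply ex_derive_id.
  - exact (ex_derive_plus F G x (IHF x Hx) (IHG x Hx)).
  - exact (ex_derive_mult F G x (IHF x Hx) (IHG x Hx)).
  - apply (ex_derive_ext_loc F); [|auto]. exact (filter_imp D _ HFG (D_open x Hx)).
Qed.

Lemma fun_alg_Derive F : fun_alg D B F -> fun_alg D B (Derive F).
Proof.
  induction 1 as [F HF | c | | F G HF IHF HG IHG | F G HF IHF HG IHG | F G _ IHF HFG].
  - apply gen_Derive, HF.
  - apply (fun_alg_ext _ _ (fun _ => 0)); [apply fun_alg_const|].
    intros x _. symmetry. apply Derive_const.
  - apply (fun_alg_ext _ _ (fun _ => 1)); [apply fun_alg_const|].
    intros x _. symmetry. apply Derive_id.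
  - apply (fun_alg_ext _ _ (fun x => Derive F x + Derive G x)); [apply fun_alg_plus; auto|].
    intros x Hx. symmetry. apply Derive_plus; apply (fun_alg_ex_derive _ x); auto.
  - apply (fun_alg_ext _ _ (fun x => Derive F x * G x + F x * Derive G x)).
    + apply fun_alg_plus; apply fun_alg_mult; auto.
    + intros x Hx. symmetry. apply Derive_mult; apply (fun_alg_ex_derive _ x); auto.
  - apply (fun_alg_ext _ _ (Derive F)); [exact IHF|].
    intros x Hx. apply Derive_ext_loc. exact (filter_imp D _ HFG (D_open x Hx)).
Qed.

Lemma fun_alg_Derive_n F n : fun_alg D B F -> fun_alg D B (Derive_n F n).
Proof.
  intros HF. induction n as [|n IHn]; [exact HF|]. exact (fun_alg_Derive _ IHn).
Qed.

Lemma fun_alg_ex_derive_n F n x : fun_alg D B F -> D x -> ex_derive_n F n x.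
Proof.
  intros HF Hx. destruct n as [|n]; [exact I|].
  exact (fun_alg_ex_derive _ x (fun_alg_Derive_n F n HF) Hx).
Qed.

(* Each differentiation of [h ^ r * w] keeps a factor [h ^ (r - 1)]. *)
Lemma Derive_n_pow_mul_root h w a r j :
  fun_alg D B h -> fun_alg D B w -> D a -> h a = 0 -> (j < r)%nat ->
  Derive_n (fun x => h x ^ r * w x) j a = 0.
Proof.
  intros Hh Hw Ha Hha. revert r w Hw.
  induction j as [|j IHj]; intros r w Hw Hjr; destruct r as [|r]; try lia.
  - simpl. rewrite Hha. ring.
  - replace (S j) with (j + 1)%nat by lia. rewrite <- Derive_n_comp.
    rewrite (Derive_n_ext_loc _
      (fun x => h x ^ r * (INR (S r) * Derive h x * w x + h x * Derive w x))).
    + apply IHj; [|lia]. apply fun_alg_plus; apply fun_alg_mult;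
        auto using fun_alg_mult, fun_alg_const, fun_alg_Derive.
    + apply (filter_imp D); [|exact (D_open a Ha)]. intros y Hy.
      change (Derive (fun x => h x ^ S r * w x) y
              = h y ^ r * (INR (S r) * Derive h y * w y + h y * Derive w y)).
      apply is_derive_unique.
      replace (h y ^ r * (INR (S r) * Derive h y * w y + h y * Derive w y))
        with (INR (S r) * Derive h y * h y ^ r * w y + h y ^ S r * Derive w y)
        by (rewrite <- tech_pow_Rmult; ring).
      apply (is_derive_mult (fun x => h x ^ S r) w); [| |intros; apply Rmult_comm].
      * apply (is_derive_pow h (S r)), Derive_correct, (fun_alg_ex_derive _ y); auto.
      * apply Derive_correct, (fun_alg_ex_derive _ y); auto.
Qed.

End FunAlgebra.

Definition is_poly : (R -> R) -> Prop := fun_alg (fun _ => True) (fun _ => False).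

Lemma is_poly_Derive P : is_poly P -> is_poly (Derive P).
Proof. apply fun_alg_Derive; [intros; apply filter_true | contradiction]. Qed.

Lemma is_poly_is_derive P t : is_poly P -> is_derive P t (Derive P t).
Proof.
  intros HP. apply Derive_correct.
  apply (fun_alg_ex_derive (fun _ => True) (fun _ => False)); try easy.
  intros; apply filter_true.
Qed.

Lemma is_poly_continuous P t : is_poly P -> continuous P t.
Proof.
  intros HP. apply (@ex_derive_continuous R_AbsRing R_NormedModule).
  exists (Derive P t). apply is_poly_is_derive, HP.
Qed.

Definition sqrt_laurent : (R -> R) -> Prop :=
  fun_alg (fun x => 0 < x) (fun F => F = sqrt \/ F = (fun x => / sqrt x)).

Lemma sqrt_laurent_gen_Derive F :
  F = sqrt \/ F = (fun x => / sqrt x) ->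
  (forall x, 0 < x -> ex_derive F x) /\ sqrt_laurent (Derive F).
Proof.
  assert (Hsqrt : forall x, 0 < x -> is_derive sqrt x (/ 2 * / sqrt x)).
  { intros x Hx. assert (Hs : 0 < sqrt x) by (apply sqrt_lt_R0, Hx).
    replace (/ 2 * / sqrt x) with (1 / (2 * sqrt (id x))) by (unfold id; field; lra).
    exact (is_derive_sqrt id x 1 (is_derive_id x) Hx). }
  assert (Hisqrt : forall x, 0 < x ->
    is_derive (fun y => / sqrt y) x (- / 2 * (/ sqrt x * (/ sqrt x * / sqrt x)))).
  { intros x Hx. assert (Hs : 0 < sqrt x) by (apply sqrt_lt_R0, Hx).
    replace (- / 2 * (/ sqrt x * (/ sqrt x * / sqrt x))) with (- (/ 2 * / sqrt x) / sqrt x ^ 2)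
      by (field; lra).
    apply is_derive_inv; [apply Hsqrt, Hx | lra]. }
  assert (Hisq : sqrt_laurent (fun x => / sqrt x)) by (apply fun_alg_gen; right; reflexivity).
  intros [-> | ->]; split.
  - intros x Hx. eexists. apply Hsqrt, Hx.
  - apply (fun_alg_ext _ _ (fun x => (fun _ => / 2) x * / sqrt x)).
    + apply fun_alg_mult; [apply fun_alg_const | exact Hisq].
    + intros x Hx. symmetry. apply is_derive_unique, Hsqrt, Hx.
  - intros x Hx. eexists. apply Hisqrt, Hx.
  - apply (fun_alg_ext _ _
      (fun x => (fun _ => - / 2) x * ((fun y => / sqrt y) x * ((fun y => / sqrt y) x * / sqrt x)))).
    + repeat apply fun_alg_mult; try apply fun_alg_const; exact Hisq.
    + intros x Hx. symmetry. apply is_derive_unique, Hisqrt, Hx.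
Qed.

Lemma sqrt_laurent_ex_derive_n F n x : sqrt_laurent F -> 0 < x -> ex_derive_n F n x.
Proof. apply fun_alg_ex_derive_n; [exact locally_pos | exact sqrt_laurent_gen_Derive]. Qed.

Lemma Derive_n_sqrt_laurent_pow_mul_root h w a r j :
  sqrt_laurent h -> sqrt_laurent w -> 0 < a -> h a = 0 -> (j < r)%nat ->
  Derive_n (fun x => h x ^ r * w x) j a = 0.
Proof. apply Derive_n_pow_mul_root; [exact locally_pos | exact sqrt_laurent_gen_Derive]. Qed.

Lemma sqrt_laurent_sqrt : sqrt_laurent sqrt.
Proof. apply fun_alg_gen. left. reflexivity. Qed.

(** * Monomials in [sqrt x] with polynomial coefficients *)

Definition sqrt_mono (m : nat) (P : R -> R) (x : R) : R := sqrt x ^ m * P (sqrt x).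

(* With [t = sqrt x], [d/dx (t ^ m * P t) = t ^ (m - 2) * sqrt_mono_dpoly m P t]. *)
Definition sqrt_mono_dpoly (m : nat) (P : R -> R) (t : R) : R :=
  INR m / 2 * P t + t / 2 * Derive P t.

Lemma is_poly_sqrt_mono_dpoly m P : is_poly P -> is_poly (sqrt_mono_dpoly m P).
Proof.
  intros HP. unfold sqrt_mono_dpoly.
  apply fun_alg_plus; apply fun_alg_mult; try apply fun_alg_const; try exact HP.
  - exact (fun_alg_mult _ _ (fun t => t) (fun _ => / 2) (fun_alg_id _ _) (fun_alg_const _ _ _)).
  - exact (is_poly_Derive P HP).
Qed.

Lemma sqrt_mono_0 m P : (1 <= m)%nat -> sqrt_mono m P 0 = 0.
Proof. intros Hm. unfold sqrt_mono. rewrite sqrt_0, pow_i by lia. ring. Qed.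

Lemma continuous_sqrt_mono m P x : is_poly P -> continuous (sqrt_mono m P) x.
Proof.
  intros HP. unfold sqrt_mono.
  apply (@continuous_mult R_UniformSpace R_AbsRing (fun y => sqrt y ^ m) (fun y => P (sqrt y))).
  - apply (continuous_comp sqrt (fun t => t ^ m)); [apply continuous_sqrt|].
    apply (@ex_derive_continuous R_AbsRing R_NormedModule). eexists.
    apply (is_derive_pow (fun t => t)), is_derive_id.
  - apply (continuous_comp sqrt P); [apply continuous_sqrt|].
    apply is_poly_continuous, HP.
Qed.

Lemma is_derive_sqrt_mono m P x :
  is_poly P -> (2 <= m)%nat -> 0 < x ->
  is_derive (sqrt_mono m P) x (sqrt_mono (m - 2) (sqrt_mono_dpoly m P) x).
Proof.
  intros HP Hm Hx. assert (Hs : 0 < sqrt x) by (apply sqrt_lt_R0, Hx).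
  assert (Hd := is_derive_comp (fun t => t ^ m * P t) sqrt x _ _
    (is_derive_mult (fun t => t ^ m) P _ _ _
       (is_derive_pow (fun t => t) m _ _ (is_derive_id (sqrt x)))
       (is_poly_is_derive P (sqrt x) HP) Rmult_comm)
    (is_derive_sqrt (fun y => y) x 1 (is_derive_id x) Hx)).
  replace (sqrt_mono (m - 2) (sqrt_mono_dpoly m P) x) with (1 / (2 * sqrt x) *
    (INR m * 1 * sqrt x ^ Nat.pred m * P (sqrt x) + sqrt x ^ m * Derive P (sqrt x)));
    [exact Hd|].
  unfold sqrt_mono, sqrt_mono_dpoly. destruct m as [|[|m]]; [lia|lia|].
  replace (S (S m) - 2)%nat with m by lia. simpl Nat.pred. rewrite <- !tech_pow_Rmult.
  field. lra.
Qed.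

Lemma is_derive_nonneg_sqrt_mono m P x :
  is_poly P -> (2 <= m)%nat -> 0 <= x ->
  is_derive_nonneg (sqrt_mono m P) x (sqrt_mono (m - 2) (sqrt_mono_dpoly m P) x).
Proof.
  intros HP Hm [Hx | <-].
  - apply is_derive_nonneg_of_is_derive, is_derive_sqrt_mono; assumption.
  - replace (sqrt_mono (m - 2) (sqrt_mono_dpoly m P) 0) with (0 ^ (m - 2) * P 0).
    + apply (is_derive_nonneg_0 _ (fun t => t ^ (m - 2) * P t)).
      * apply (@ex_derive_continuous R_AbsRing R_NormedModule). eexists.
        apply (is_derive_mult (fun t => t ^ (m - 2)) P); [| apply is_poly_is_derive, HP |].
        -- apply (is_derive_pow (fun t => t)), is_derive_id.
        -- intros; apply Rmult_comm.
      * intros h Hh. assert (Hs : 0 < sqrt h) by (apply sqrt_lt_R0, Hh).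
        unfold sqrt_mono. rewrite sqrt_0, pow_i by lia.
        replace m with (S (S (m - 2))) at 1 by lia. rewrite <- !tech_pow_Rmult.
        unfold Rdiv. replace (/ h) with (/ (sqrt h * sqrt h)) by (rewrite sqrt_sqrt; lra).
        field. lra.
    + unfold sqrt_mono, sqrt_mono_dpoly. rewrite sqrt_0.
      destruct (m - 2)%nat as [|n] eqn:Hm2.
      * replace m with 2%nat by lia. simpl. field.
      * rewrite pow_i by lia. ring.
Qed.

Fixpoint sqrt_mono_dpoly_iter (m : nat) (P : R -> R) (j : nat) : R -> R :=
  match j with
  | O => P
  | S j => sqrt_mono_dpoly (m - 2 * j) (sqrt_mono_dpoly_iter m P j)
  end.

Definition sqrt_mono_derivs (m : nat) (P : R -> R) (j : nat) : R -> R :=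
  sqrt_mono (m - 2 * j) (sqrt_mono_dpoly_iter m P j).

Lemma is_poly_sqrt_mono_dpoly_iter m P j : is_poly P -> is_poly (sqrt_mono_dpoly_iter m P j).
Proof.
  intros HP. induction j as [|j IHj]; [exact HP|].
  apply is_poly_sqrt_mono_dpoly, IHj.
Qed.

Lemma is_derive_nonneg_sqrt_mono_derivs m P j x :
  is_poly P -> (2 * j + 2 <= m)%nat -> 0 <= x ->
  is_derive_nonneg (sqrt_mono_derivs m P j) x (sqrt_mono_derivs m P (S j) x).
Proof.
  intros HP Hjm Hx. unfold sqrt_mono_derivs.
  replace (m - 2 * S j)%nat with (m - 2 * j - 2)%nat by lia.
  apply is_derive_nonneg_sqrt_mono; [apply is_poly_sqrt_mono_dpoly_iter, HP | lia | exact Hx].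
Qed.

Lemma continuous_sqrt_mono_derivs m P j x : is_poly P -> continuous (sqrt_mono_derivs m P j) x.
Proof. intros HP. apply continuous_sqrt_mono, is_poly_sqrt_mono_dpoly_iter, HP. Qed.

Definition f_weight (a : R) (k : nat) (s : R) : R := (1 - (s / a) ^ (2 * k)) ^ (2 * k).

Lemma f_ak_mix a k s : f_ak a k s = f_weight a k s * s + (1 - f_weight a k s) * sqrt s.
Proof. reflexivity. Qed.

Lemma f_weight_nonneg a k s : 0 <= f_weight a k s.
Proof. unfold f_weight. rewrite pow_mult. apply pow_le, pow2_ge_0. Qed.

Lemma pow_unit_interval x n : 0 <= x <= 1 -> 0 <= x ^ n <= 1.
Proof. intros Hx. split; [apply pow_le; lra|]. rewrite <- (pow1 n). apply pow_incr. lra. Qed.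

Lemma div_unit_interval s a : 0 < a -> 0 <= s <= a -> 0 <= s / a <= 1.
Proof.
  intros Ha Hs. split; [apply Rdiv_le_0_compat; lra | apply (Rdiv_le_1 s a Ha); lra].
Qed.

Lemma f_weight_le_1 a k s : 0 < a -> 0 <= s <= a -> f_weight a k s <= 1.
Proof.
  intros Ha Hs. pose proof (pow_unit_interval _ (2 * k) (div_unit_interval s a Ha Hs)).
  apply pow_unit_interval. lra.
Qed.

Lemma f_weight_antitone a k s t :
  0 < a -> 0 <= s -> s <= t -> t <= a -> f_weight a k t <= f_weight a k s.
Proof.
  intros Ha Hs Hst Ht.
  assert (Hta : 0 <= t <= a) by lra.
  pose proof (pow_unit_interval _ (2 * k) (div_unit_interval t a Ha Hta)).
  apply pow_incr. split; [lra|].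
  apply Rplus_le_compat_l, Ropp_le_contravar, pow_incr. split.
  - apply Rdiv_le_0_compat; lra.
  - unfold Rdiv. apply Rmult_le_compat_r; [left; apply Rinv_0_lt_compat|]; lra.
Qed.

Lemma sqrt_ge_id s : 0 <= s <= 1 -> s <= sqrt s.
Proof.
  intros Hs. assert (sqrt s <= 1) by (rewrite <- sqrt_1; apply sqrt_le_1; lra).
  pose proof (sqrt_pos s). rewrite <- (sqrt_sqrt s) at 1 by lra. nra.
Qed.

Lemma f_ak_nonneg a k s : 0 < a -> 0 <= s <= a -> 0 <= f_ak a k s.
Proof.
  intros Ha Hs. rewrite f_ak_mix.
  pose proof (f_weight_le_1 a k s Ha Hs). pose proof (f_weight_nonneg a k s).
  pose proof (sqrt_pos s). nra.
Qed.

Lemma f_ak_increasing a k s t :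
  0 < a -> a <= 1 -> 0 <= s -> s < t -> t <= a -> f_ak a k s < f_ak a k t.
Proof.
  intros Ha Ha1 Hs Hst Ht. rewrite !f_ak_mix.
  set (ws := f_weight a k s). set (wt := f_weight a k t).
  assert (Hws : 0 <= ws <= 1) by (split; [apply f_weight_nonneg | apply f_weight_le_1; lra]).
  assert (Hw : wt <= ws) by (apply f_weight_antitone; lra).
  assert (Hsqrt : sqrt s < sqrt t) by (apply sqrt_lt_1; lra).
  assert (Ht_sqrt : t <= sqrt t) by (apply sqrt_ge_id; lra).
  assert (Hmix : ws * s + (1 - ws) * sqrt s < ws * t + (1 - ws) * sqrt t)
    by (destruct (Rle_lt_dec ws (1 / 2)); nra).
  nra.
Qed.

Lemma f_ak_le_sqrt a k s : 0 <= s <= 1 -> f_ak a k s <= sqrt s.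
Proof.
  intros Hs. rewrite f_ak_mix. pose proof (f_weight_nonneg a k s).
  pose proof (sqrt_ge_id s Hs). nra.
Qed.

Lemma one_sub_pow_geom u n :
  (1 <= n)%nat -> 1 - (1 - u) ^ n = u * sum_f_R0 (fun i => (1 - u) ^ i) (n - 1).
Proof.
  intros Hn. pose proof (GP_finite (1 - u) (n - 1)) as Hgp.
  replace (n - 1 + 1)%nat with n in Hgp by lia. lra.
Qed.

Definition f_poly (a : R) (k : nat) (t : R) : R :=
  (/ a) ^ (2 * k) * sum_f_R0 (fun i => (1 - (t * t / a) ^ (2 * k)) ^ i) (2 * k - 1) * (1 - t).

Lemma is_poly_f_poly a k : is_poly (f_poly a k).
Proof.
  unfold f_poly. apply fun_alg_mult; [apply fun_alg_mult|].
  - apply fun_alg_const.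
  - apply (fun_alg_sum _ _ (fun i t => (1 - (t * t / a) ^ (2 * k)) ^ i)). intros i.
    apply fun_alg_pow, fun_alg_minus; [apply fun_alg_const|]. apply fun_alg_pow.
    apply (fun_alg_mult _ _ (fun t => t * t) (fun _ => / a));
      [apply fun_alg_mult; apply fun_alg_id | apply fun_alg_const].
  - apply fun_alg_minus; [apply fun_alg_const | apply fun_alg_id].
Qed.

Lemma f_ak_sqrt_mono a k x :
  (1 <= k)%nat -> 0 <= x -> f_ak a k x = x + sqrt_mono (4 * k + 1) (f_poly a k) x.
Proof.
  intros Hk Hx. unfold f_ak, sqrt_mono, f_poly.
  assert (Hxt : x = sqrt x * sqrt x) by (symmetry; apply sqrt_sqrt, Hx).
  set (t := sqrt x) in *. rewrite Hxt.
  set (n := (2 * k)%nat). set (u := (t * t / a) ^ n).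
  set (g := sum_f_R0 (fun i => (1 - u) ^ i) (n - 1)).
  assert (Hgeom : (1 - u) ^ n = 1 - u * g)
    by (pose proof (one_sub_pow_geom u n ltac:(unfold n; lia)); unfold g; lra).
  assert (Hpow : t ^ (4 * k + 1) * (/ a) ^ n = t * u).
  { unfold u, Rdiv. rewrite Rpow_mult_distr.
    replace (4 * k + 1)%nat with (S (2 * n)) by (unfold n; lia).
    rewrite <- tech_pow_Rmult, pow_mult. replace (t ^ 2) with (t * t) by ring. ring. }
  replace (t ^ (4 * k + 1) * ((/ a) ^ n * g * (1 - t)))
    with (t ^ (4 * k + 1) * (/ a) ^ n * g * (1 - t)) by ring.
  rewrite Hpow, Hgeom. ring.
Qed.

Definition id_derivs (j : nat) (x : R) : R :=
  match j with O => x | 1%nat => 1 | _ => 0 end.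

Lemma is_derive_id_derivs j x : is_derive (id_derivs j) x (id_derivs (S j) x).
Proof.
  destruct j as [|[|j]];
    [exact (is_derive_id x) | exact (is_derive_const 1 x) | exact (is_derive_const 0 x)].
Qed.

Lemma continuous_id_derivs j x : continuous (id_derivs j) x.
Proof.
  destruct j as [|[|j]];
    [exact (continuous_id x) | exact (continuous_const 1 x) | exact (continuous_const 0 x)].
Qed.

(* [f_derivs a k 0] is [f_ak a k] itself: its decomposition only agrees with it on [0, +oo). *)
Definition f_derivs (a : R) (k j : nat) : R -> R :=
  match j with
  | O => f_ak a k
  | S _ => fun x => id_derivs j x + sqrt_mono_derivs (4 * k + 1) (f_poly a k) j x
  end.

Lemma f_derivs_eq a k j x :
  (1 <= k)%nat -> 0 <= x ->
  f_derivs a k j x = id_derivs j x + sqrt_mono_derivs (4 * k + 1) (f_poly a k) j x.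
Proof.
  intros Hk Hx. destruct j as [|j]; [|reflexivity].
  unfold sqrt_mono_derivs. rewrite Nat.mul_0_r, Nat.sub_0_r. apply f_ak_sqrt_mono; assumption.
Qed.

Lemma is_derive_nonneg_f_derivs a k j x :
  (1 <= k)%nat -> (j < 2 * k)%nat -> 0 <= x ->
  is_derive_nonneg (f_derivs a k j) x (f_derivs a k (S j) x).
Proof.
  intros Hk Hj Hx. rewrite f_derivs_eq by assumption.
  apply (is_derive_nonneg_ext
           (fun y => id_derivs j y + sqrt_mono_derivs (4 * k + 1) (f_poly a k) j y));
    [exact Hx | intros y Hy; symmetry; apply f_derivs_eq; assumption |].
  apply is_derive_nonneg_plus.
  - apply is_derive_nonneg_of_is_derive, is_derive_id_derivs.
  - apply is_derive_nonneg_sqrt_mono_derivs; [apply is_poly_f_poly | lia | exact Hx].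
Qed.

Lemma continuous_f_derivs a k x : (1 <= k)%nat -> continuous (f_derivs a k (2 * k)) x.
Proof.
  intros Hk. replace (2 * k)%nat with (S (2 * k - 1)) by lia.
  apply (@continuous_plus R_UniformSpace R_AbsRing R_NormedModule).
  - apply continuous_id_derivs.
  - apply continuous_sqrt_mono_derivs, is_poly_f_poly.
Qed.

Lemma f_derivs_1_0 a k : (1 <= k)%nat -> f_derivs a k 1 0 = 1.
Proof.
  intros Hk. simpl. unfold sqrt_mono_derivs. rewrite sqrt_mono_0 by lia. ring.
Qed.

Lemma f_derivs_0 a k j :
  (1 <= k)%nat -> (j <= 2 * k)%nat -> j <> 1%nat -> f_derivs a k j 0 = 0.
Proof.
  intros Hk Hj Hj1. rewrite f_derivs_eq by (lia || lra).
  unfold sqrt_mono_derivs. rewrite sqrt_mono_0 by lia.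
  destruct j as [|[|j]]; [| lia |]; simpl; ring.
Qed.

Lemma f_ak_sub_sqrt a k x : f_ak a k x - sqrt x = f_weight a k x * (x - sqrt x).
Proof. rewrite f_ak_mix. ring. Qed.

Lemma sqrt_laurent_f_weight_base a k : sqrt_laurent (fun x => 1 - (x / a) ^ (2 * k)).
Proof.
  apply fun_alg_minus; [apply fun_alg_const|]. apply fun_alg_pow.
  exact (fun_alg_mult _ _ _ (fun _ => / a) (fun_alg_id _ _) (fun_alg_const _ _ _)).
Qed.

Lemma sqrt_laurent_f_ak a k : sqrt_laurent (f_ak a k).
Proof.
  pose proof (fun_alg_pow _ _ _ (2 * k) (sqrt_laurent_f_weight_base a k)) as Hw.
  apply (fun_alg_ext _ _ (fun x => f_weight a k x * x + (1 - f_weight a k x) * sqrt x));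
    [|intros; symmetry; apply f_ak_mix].
  apply fun_alg_plus; apply fun_alg_mult; try exact Hw.
  - apply fun_alg_id.
  - apply fun_alg_minus; [apply fun_alg_const | exact Hw].
  - exact sqrt_laurent_sqrt.
Qed.

Lemma Derive_n_f_ak_sqrt a k j :
  0 < a -> (j < 2 * k)%nat -> Derive_n (f_ak a k) j a = Derive_n sqrt j a.
Proof.
  intros Ha Hj.
  assert (Hvanish : Derive_n (fun x => f_weight a k x * (x - sqrt x)) j a = 0).
  { apply (Derive_n_sqrt_laurent_pow_mul_root (fun x => 1 - (x / a) ^ (2 * k)));
      [apply sqrt_laurent_f_weight_base | | exact Ha | | exact Hj].
    - apply fun_alg_minus; [apply fun_alg_id | exact sqrt_laurent_sqrt].
    - unfold Rdiv. rewrite Rinv_r, pow1 by lra. ring. }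
  rewrite (Derive_n_ext _ (fun x => f_ak a k x - sqrt x)) in Hvanish
    by (intros x; symmetry; apply f_ak_sub_sqrt).
  rewrite Derive_n_minus in Hvanish; [lra | |];
    apply (filter_imp (fun y => 0 < y)); try apply locally_pos, Ha;
    intros y Hy i _; apply sqrt_laurent_ex_derive_n; try exact Hy.
  - apply sqrt_laurent_f_ak.
  - exact sqrt_laurent_sqrt.
Qed.

Theorem lemma3p1 (k : nat) (a : R) (hk : (1 <= k)%nat) (ha0 : 0 < a) (ha1 : a <= 1) :
  (* f_{a,k} is non-negative and strictly increasing on [0,a] *)
  (forall s, 0 <= s <= a -> 0 <= f_ak a k s) /\
  (forall s t, 0 <= s -> s < t -> t <= a -> f_ak a k s < f_ak a k t) /\
  (* f_{a,k} is C^{2k} on [0,+oo), with derivatives d j, and: *)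
  (exists d : nat -> R -> R,
     d O = f_ak a k /\
     (forall j x, (j < 2 * k)%nat -> 0 <= x -> is_derive_nonneg (d j) x (d (S j) x)) /\
     (forall x, 0 <= x -> continuous_nonneg (d (2 * k)%nat) x) /\
     (* its Taylor polynomial of degree 2k at 0 is s *)
     (forall x, taylor_poly d (2 * k) 0 x = x) /\
     (* its Taylor polynomial of degree 2k-1 at a is that of sqrt at a *)
     (forall x, taylor_poly d (2 * k - 1) a x
                = taylor_poly (fun j => Derive_n sqrt j) (2 * k - 1) a x)) /\
  (* f_{a,k}(s) <= sqrt s on [0,1] *)
  (forall s, 0 <= s <= 1 -> f_ak a k s <= sqrt s).
Proof.
  split; [intros s Hs; apply f_ak_nonneg; assumption|].
  split; [intros s t Hs Hst Ht; apply f_ak_increasing; assumption|].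
  split; [|intros s Hs; apply f_ak_le_sqrt, Hs].
  assert (Hd : forall j x, (j < 2 * k)%nat -> 0 <= x ->
            is_derive_nonneg (f_derivs a k j) x (f_derivs a k (S j) x))
    by (intros; apply is_derive_nonneg_f_derivs; assumption).
  exists (f_derivs a k). split; [reflexivity|]. split; [exact Hd|]. split; [|split].
  - intros x _. apply continuous_nonneg_of_continuous, continuous_f_derivs, hk.
  - intros x. apply taylor_poly_0_id; [lia | apply f_derivs_1_0, hk |].
    intros j Hj Hj1. apply f_derivs_0; assumption.
  - intros x. apply taylor_poly_ext. intros j Hj.
    rewrite <- (Derive_n_of_is_derive_nonneg _ (2 * k) Hd j a) by (lia || lra).
    apply Derive_n_f_ak_sqrt; [exact ha0 | lia].
Qed.
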